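(* Let $\mathcal{C}$ be a category and $A$ an object of $\mathcal{C}$ satisfying the axioms RC0, RC1, RC2 below, and let $G=\mathrm{Aut}(A)^{op}$. Then for every object $X$ the set $[A,X]$ with the left $G$-action $g\cdot x=x\circ g$ is a transitive $G$-set, giving a functor $[A,-]_G\colon\mathcal{C}\to t\mathcal{E}ns^G$. This functor has a left adjoint $A\times_G(-)$, given on a transitive $G$-set $E$ by $A\times_G E=A/H$ where $H=\mathrm{Fix}(x_0)=\{g: g\cdot x_0=x_0\}$ for any chosen $x_0\in E$; the unit $E\cong[A,A]/H\to[A,A/H]$ and the counit $A/\mathrm{Fix}(x)\to X$ (for $x\in[A,X]$) are isomorphisms. Hence $[A,-]_G$ and $A\times_G(-)$ establish an equivalence of categories $\mathcal{C}\simeq t\mathcal{E}ns^G$.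
   Context: $t\mathcal{E}ns^G$ denotes the category of transitive (left) $G$-sets with equivariant maps. An arrow $f\colon X\to Y$ is a strict epimorphism if for every arrow $g\colon X\to Z$ compatible with $f$ (for every object $C$ and all $u,v\colon C\to X$ with $f\circ u=f\circ v$ one has $g\circ u=g\circ v$) there is a unique $k\colon Y\to Z$ with $g=k\circ f$. For a group $H$ acting on $A$ by automorphisms (a homomorphism $H\to\mathrm{Aut}(A)^{op}$), the quotient $q\colon A\to A/H$ is an arrow with $q\circ h=q$ for all $h\in H$, universal among such arrows. Axioms: RC0: for every object $X$ there exists an arrow $A\to X$, and every arrow $A\to X$ is a strict epimorphism. RC1: for every subgroup $H\subseteq\mathrm{Aut}(A)$ the quotient $q\colon A\to A/H$ exists and the map $[A,A]\to[A,A/H]$, $f\mapsto q\circ f$, is surjective with $q\circ f=q\circ g$ iff $f=h\circ g$ for some $h\in H$. RC2: $[A,A]=\mathrm{Aut}(A)$. *)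

Record Category := {
  Ob :> Type;
  Hom : Ob -> Ob -> Type;
  comp : forall X Y Z : Ob, Hom Y Z -> Hom X Y -> Hom X Z;
  idm : forall X : Ob, Hom X X;
  comp_assoc : forall (X Y Z W : Ob) (f : Hom X Y) (g : Hom Y Z) (h : Hom Z W),
      comp X Z W h (comp X Y Z g f) = comp X Y W (comp Y Z W h g) f;
  comp_id_l : forall (X Y : Ob) (f : Hom X Y), comp X Y Y (idm Y) f = f;
  comp_id_r : forall (X Y : Ob) (f : Hom X Y), comp X X Y f (idm X) = f
}.

Arguments Hom {C} X Y : rename.
Arguments comp {C X Y Z} g f : rename.
Arguments idm {C} X : rename.

Notation "g ∘ f" := (comp g f) (at level 40, left associativity).


Definition compatible {C : Category} {X Y Z : C} (f : Hom X Y) (g : Hom X Z) : Prop :=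
  forall (W : C) (u v : Hom W X), f ∘ u = f ∘ v -> g ∘ u = g ∘ v.

Definition strict_epi {C : Category} {X Y : C} (f : Hom X Y) : Prop :=
  forall (Z : C) (g : Hom X Z), compatible f g -> exists! k : Hom Y Z, g = k ∘ f.

Definition is_iso {C : Category} {X Y : C} (f : Hom X Y) : Prop :=
  exists g : Hom Y X, g ∘ f = idm X /\ f ∘ g = idm Y.

Definition Aut {C : Category} (A : C) : Type := { f : Hom A A | is_iso f }.

Lemma is_iso_id {C : Category} (A : C) : is_iso (idm A).
Proof. exists (idm A); split; apply comp_id_l. Qed.

Lemma is_iso_comp {C : Category} {X Y Z : C} (f : Hom X Y) (g : Hom Y Z) :
  is_iso f -> is_iso g -> is_iso (g ∘ f).
Proof.
  intros [f' [Hf1 Hf2]] [g' [Hg1 Hg2]]. exists (f' ∘ g'). split.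
  - rewrite comp_assoc, <- (comp_assoc _ _ _ _ _ g g' f'), Hg1, comp_id_r. exact Hf1.
  - rewrite comp_assoc, <- (comp_assoc _ _ _ _ _ f' f g), Hf2, comp_id_r. exact Hg2.
Qed.

Definition G_one {C : Category} (A : C) : Aut A := exist _ (idm A) (is_iso_id A).

(* multiplication of G = Aut(A)^op :  g * h := h ∘ g *)
Definition G_mul {C : Category} {A : C} (g h : Aut A) : Aut A :=
  exist _ (proj1_sig h ∘ proj1_sig g)
        (is_iso_comp _ _ (proj2_sig g) (proj2_sig h)).

Definition is_Gaction {C : Category} (A : C) {E : Type} (act : Aut A -> E -> E) : Prop :=
  (forall x, act (G_one A) x = x) /\
  (forall g h x, act (G_mul g h) x = act g (act h x)).

Definition transitive {C : Category} (A : C) {E : Type} (act : Aut A -> E -> E) : Prop :=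
  inhabited E /\ forall x y : E, exists g : Aut A, act g x = y.

Definition equivariant {C : Category} (A : C) {E E' : Type}
  (act : Aut A -> E -> E) (act' : Aut A -> E' -> E') (phi : E -> E') : Prop :=
  forall (g : Aut A) (x : E), phi (act g x) = act' g (phi x).

Definition bijective {E E' : Type} (phi : E -> E') : Prop :=
  (forall x y, phi x = phi y -> x = y) /\ (forall y, exists x, phi x = y).

Definition homact {C : Category} (A X : C) (g : Aut A) (x : Hom A X) : Hom A X :=
  x ∘ proj1_sig g.

Definition Fix {C : Category} (A : C) {E : Type} (act : Aut A -> E -> E) (x0 : E)
  : Hom A A -> Prop :=
  fun h => exists p : is_iso h, act (exist _ h p) x0 = x0.

Definition is_aut_subgroup {C : Category} (A : C) (H : Hom A A -> Prop) : Prop :=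
  (forall h, H h -> is_iso h) /\
  H (idm A) /\
  (forall h h', H h -> H h' -> H (h ∘ h')) /\
  (forall h h', H h -> h' ∘ h = idm A -> h ∘ h' = idm A -> H h').

Definition is_quotient {C : Category} (A : C) (H : Hom A A -> Prop) {Q : C}
  (q : Hom A Q) : Prop :=
  (forall h, H h -> q ∘ h = q) /\
  (forall (Z : C) (f : Hom A Z), (forall h, H h -> f ∘ h = f) ->
     exists! k : Hom Q Z, f = k ∘ q).

Definition RC0 {C : Category} (A : C) : Prop :=
  forall X : C, inhabited (Hom A X) /\ forall x : Hom A X, strict_epi x.

Definition RC1 {C : Category} (A : C) : Prop :=
  forall H : Hom A A -> Prop, is_aut_subgroup A H ->
    exists (Q : C) (q : Hom A Q),
      is_quotient A H q /\
      (forall y : Hom A Q, exists f : Hom A A, y = q ∘ f) /\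
      (forall f g : Hom A A, q ∘ f = q ∘ g <-> exists h, H h /\ f = h ∘ g).

Definition RC2 {C : Category} (A : C) : Prop :=
  forall f : Hom A A, is_iso f.

From Stdlib Require Import ProofIrrelevance IndefiniteDescription.

(* Everything comes from the orbit-stabiliser picture. By RC2 the endomorphisms
   of A form the group G, and for x : A -> X one has x ∘ a = x ∘ b exactly when
   a = h ∘ b for some h in Fix(x). Since A covers every object (RC0),
   compatibility with x can be tested on endomorphisms of A; so every
   Fix(x)-invariant arrow is compatible with x, and as x is a strict
   epimorphism, x itself is a quotient A -> A/Fix(x). Quotients being unique up
   to isomorphism, this is the counit, and the surjectivity part of RC1 for it
   is the transitivity of [A,X]. For a transitive E and x0 in E, the kernel
   description in RC1 makes g·x0 |-> q ∘ g a well-defined equivariant bijection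
   E -> [A,A/Fix(x0)]; its universal property is that of the quotient q. *)

Lemma strict_epi_epi {C : Category} {X Y : C} (x : Hom X Y) :
  strict_epi x -> forall (Z : C) (k k' : Hom Y Z), k ∘ x = k' ∘ x -> k = k'.
Proof.
  intros Hx Z k k' Hkk.
  destruct (Hx Z (k ∘ x)) as [l [_ Hl]].
  - intros W u v Huv. rewrite <- !comp_assoc, Huv. reflexivity.
  - rewrite <- (Hl k eq_refl). exact (Hl k' Hkk).
Qed.

Lemma quotient_epi {C : Category} {A : C} {H : Hom A A -> Prop} {Q : C}
  (q : Hom A Q) :
  is_quotient A H q -> forall (Z : C) (k k' : Hom Q Z), k ∘ q = k' ∘ q -> k = k'.
Proof.
  intros [Hq Uq] Z k k' Hkk.
  destruct (Uq Z (k ∘ q)) as [l [_ Hl]].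
  - intros h Hh. rewrite <- comp_assoc, (Hq h Hh). reflexivity.
  - rewrite <- (Hl k eq_refl). exact (Hl k' Hkk).
Qed.

Lemma quotient_unique {C : Category} {A : C} {H : Hom A A -> Prop} {Q Q' : C}
  (q : Hom A Q) (q' : Hom A Q') :
  is_quotient A H q -> is_quotient A H q' ->
  exists k : Hom Q Q', q' = k ∘ q /\ is_iso k.
Proof.
  intros Hq Hq'.
  destruct (proj2 Hq Q' q' (proj1 Hq')) as [k [Hk _]].
  destruct (proj2 Hq' Q q (proj1 Hq)) as [l [Hl _]].
  exists k. split; [exact Hk|]. exists l. split.
  - apply (quotient_epi q Hq). rewrite <- comp_assoc, <- Hk, <- Hl, comp_id_l. reflexivity.
  - apply (quotient_epi q' Hq'). rewrite <- comp_assoc, <- Hl, <- Hk, comp_id_l. reflexivity.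
Qed.

Lemma Aut_ext {C : Category} {A : C} (g g' : Aut A) :
  proj1_sig g = proj1_sig g' -> g = g'.
Proof. apply eq_sig_hprop. intros; apply proof_irrelevance. Qed.

Lemma homact_Gaction {C : Category} (A X : C) : is_Gaction A (homact A X).
Proof. split; intros; [apply comp_id_r | apply comp_assoc]. Qed.

Section Stabilizer.

Context {C : Category} {A : C} {E : Type} (act : Aut A -> E -> E).

Lemma orbit_map_factor (x0 : E) {T : Type} (F : Aut A -> T) :
  transitive A act ->
  (forall g g', act g x0 = act g' x0 -> F g = F g') ->
  exists u : E -> T, forall g, u (act g x0) = F g.
Proof.
  intros [_ Htr] HF.
  exists (fun e => F (proj1_sig (constructive_indefinite_description _ (Htr x0 e)))).
  intro g. apply HF.
  exact (proj2_sig (constructive_indefinite_description _ (Htr x0 (act g x0)))).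
Qed.

Hypothesis act_G : is_Gaction A act.

Lemma act_id (g : Aut A) (x : E) : proj1_sig g = idm A -> act g x = x.
Proof. intro Hg. rewrite (Aut_ext g (G_one A) Hg). apply (proj1 act_G). Qed.

Lemma act_comp (g h k : Aut A) (x : E) :
  proj1_sig k = proj1_sig h ∘ proj1_sig g -> act k x = act g (act h x).
Proof. intro Hk. rewrite (Aut_ext k (G_mul g h) Hk). apply (proj2 act_G). Qed.

Lemma Fix_subgroup (x0 : E) : is_aut_subgroup A (Fix A act x0).
Proof.
  split; [|split; [|split]].
  - intros h [p _]. exact p.
  - exists (is_iso_id A). apply act_id. reflexivity.
  - intros h h' [p Hp] [p' Hp']. exists (is_iso_comp h' h p' p).
    rewrite (act_comp (exist _ h' p') (exist _ h p)), Hp; [exact Hp' | reflexivity].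
  - intros h h' [p Hp] Hl Hr.
    assert (p' : is_iso h') by (exists h; split; assumption).
    exists p'.
    transitivity (act (exist _ h' p') (act (exist _ h p) x0)); [rewrite Hp; reflexivity|].
    rewrite <- (act_comp (exist _ h' p') (exist _ h p) (G_one A)).
    + apply act_id. reflexivity.
    + symmetry. exact Hr.
Qed.

Lemma act_eq_Fix (x0 : E) (g g' : Aut A) :
  act g x0 = act g' x0 <->
  exists h, Fix A act x0 h /\ proj1_sig g = h ∘ proj1_sig g'.
Proof.
  split.
  - intro Hgg. destruct (proj2_sig g') as [gi [Hl Hr]].
    assert (pi : is_iso gi) by (exists (proj1_sig g'); split; assumption).
    exists (proj1_sig g ∘ gi). split.
    + exists (is_iso_comp gi (proj1_sig g) pi (proj2_sig g)).
      rewrite (act_comp (exist _ gi pi) g); [|reflexivity].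
      rewrite Hgg, <- (act_comp (exist _ gi pi) g' (G_one A)); [|symmetry; exact Hr].
      apply act_id. reflexivity.
    + rewrite <- comp_assoc, Hl, comp_id_r. reflexivity.
  - intros [h [[p Hp] Hg]]. rewrite (act_comp g' (exist _ h p) g x0 Hg), Hp. reflexivity.
Qed.

End Stabilizer.

Section RC.

Context {C : Category} (A : C).
Hypothesis rc0 : RC0 A.
Hypothesis rc1 : RC1 A.
Hypothesis rc2 : RC2 A.

Lemma compatible_of_endo {X Y : C} (x : Hom A X) (y : Hom A Y) :
  (forall a b : Hom A A, x ∘ a = x ∘ b -> y ∘ a = y ∘ b) -> compatible x y.
Proof.
  intros Hxy W u v Huv.
  destruct (rc0 W) as [[w] Hw].
  apply (strict_epi_epi w (Hw w)).
  rewrite <- !comp_assoc. apply Hxy. rewrite !comp_assoc, Huv. reflexivity.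
Qed.

Lemma Fix_invariant_compatible {X Y : C} (x : Hom A X) (y : Hom A Y) :
  (forall h, Fix A (homact A X) x h -> y ∘ h = y) -> compatible x y.
Proof.
  intro Hy. apply compatible_of_endo. intros a b Hab.
  destruct (proj1 (act_eq_Fix (homact A X) (homact_Gaction A X) x
                     (exist _ a (rc2 a)) (exist _ b (rc2 b))) Hab) as [h [Hh Ha]].
  simpl in Ha. rewrite Ha, comp_assoc, (Hy h Hh). reflexivity.
Qed.

Lemma homact_Fix_quotient {X : C} (x : Hom A X) :
  is_quotient A (Fix A (homact A X) x) x.
Proof.
  split.
  - intros h [p Hp]. exact Hp.
  - intros Z y Hy. exact (proj2 (rc0 X) x Z y (Fix_invariant_compatible x y Hy)).
Qed.

Lemma counit_iso {X Q : C} (x : Hom A X) (q : Hom A Q) :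
  is_quotient A (Fix A (homact A X) x) q -> exists k : Hom Q X, k ∘ q = x /\ is_iso k.
Proof.
  intro Hq.
  destruct (quotient_unique q x Hq (homact_Fix_quotient x)) as [k [Hk Hiso]].
  exists k. split; [symmetry; exact Hk | exact Hiso].
Qed.

Lemma quotient_RC1 (H : Hom A A -> Prop) {Q : C} (q : Hom A Q) :
  is_aut_subgroup A H -> is_quotient A H q ->
  (forall y : Hom A Q, exists f, y = q ∘ f) /\
  (forall f g : Hom A A, q ∘ f = q ∘ g <-> exists h, H h /\ f = h ∘ g).
Proof.
  intros HH Hq.
  destruct (rc1 H HH) as [Q' [q' [Hq' [Hsurj Hker]]]].
  destruct (quotient_unique q' q Hq' Hq) as [k [Hk [l [Hlk Hkl]]]].
  split.
  - intro y. destruct (Hsurj (l ∘ y)) as [f Hf]. exists f.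
    rewrite Hk, <- comp_assoc, <- Hf, comp_assoc, Hkl, comp_id_l. reflexivity.
  - intros f g. transitivity (q' ∘ f = q' ∘ g); [|apply Hker].
    rewrite Hk, <- !comp_assoc. split; intro Hfg; [|rewrite Hfg; reflexivity].
    apply (f_equal (comp l)) in Hfg.
    rewrite !comp_assoc, Hlk, !comp_id_l in Hfg. exact Hfg.
Qed.

Lemma homact_transitive (X : C) : transitive A (homact A X).
Proof.
  split; [exact (proj1 (rc0 X))|]. intros x y.
  pose proof (Fix_subgroup (homact A X) (homact_Gaction A X) x) as HFix.
  destruct (proj1 (quotient_RC1 _ x HFix (homact_Fix_quotient x)) y) as [f Hf].
  exists (exist _ f (rc2 f)). symmetry. exact Hf.
Qed.

Section Unit.

Context {E : Type} (act : Aut A -> E -> E) (x0 : E).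
Hypothesis act_G : is_Gaction A act.
Hypothesis act_trans : transitive A act.
Context {Q : C} (q : Hom A Q).
Hypothesis q_quot : is_quotient A (Fix A act x0) q.

Section UnitMap.

Variable u : E -> Hom A Q.
Hypothesis u_orbit : forall g, u (act g x0) = q ∘ proj1_sig g.

Lemma unit_map_base : u x0 = q.
Proof.
  rewrite <- (act_id act act_G (G_one A) x0 eq_refl), u_orbit. apply comp_id_r.
Qed.

Lemma unit_map_equivariant : equivariant A act (homact A Q) u.
Proof.
  intros g e. destruct (proj2 act_trans x0 e) as [g' <-].
  rewrite <- (proj2 act_G), !u_orbit. apply comp_assoc.
Qed.

Lemma unit_map_bijective : bijective u.
Proof.
  destruct (quotient_RC1 _ q (Fix_subgroup act act_G x0) q_quot) as [Hsurj Hker].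
  split.
  - intros e e'.
    destruct (proj2 act_trans x0 e) as [g <-], (proj2 act_trans x0 e') as [g' <-].
    rewrite !u_orbit. intro Hgg. apply (act_eq_Fix act act_G x0 g g'), Hker, Hgg.
  - intro y. destruct (Hsurj y) as [f ->].
    exists (act (exist _ f (rc2 f)) x0). apply u_orbit.
Qed.

Lemma unit_map_universal (X : C) (phi : E -> Hom A X) :
  equivariant A act (homact A X) phi ->
  exists! k : Hom Q X, forall e, phi e = k ∘ u e.
Proof.
  intro Hphi.
  destruct (proj2 q_quot X (phi x0)) as [k [Hk Hk_uniq]].
  { intros h [p Hp]. change (homact A X (exist _ h p) (phi x0) = phi x0).
    rewrite <- Hphi, Hp. reflexivity. }
  exists k. split.
  - intro e. destruct (proj2 act_trans x0 e) as [g <-].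
    rewrite Hphi, u_orbit, Hk. symmetry. apply comp_assoc.
  - intros k' Hk'. apply Hk_uniq. rewrite Hk', unit_map_base. reflexivity.
Qed.

End UnitMap.

Lemma unit_map_exists :
  exists u : E -> Hom A Q,
    u x0 = q /\ equivariant A act (homact A Q) u /\ bijective u /\
    (forall (X : C) (phi : E -> Hom A X),
        equivariant A act (homact A X) phi ->
        exists! k : Hom Q X, forall e : E, phi e = k ∘ u e).
Proof.
  destruct (orbit_map_factor act x0 (fun g => q ∘ proj1_sig g) act_trans)
    as [u u_orbit].
  { intros g g' Hgg.
    destruct (proj1 (act_eq_Fix act act_G x0 g g') Hgg) as [h [Hh Hg]].
    rewrite Hg, comp_assoc, (proj1 q_quot h Hh). reflexivity. }
  exists u. repeat split.
  - exact (unit_map_base u u_orbit).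
  - exact (unit_map_equivariant u u_orbit).
  - exact (proj1 (unit_map_bijective u u_orbit)).
  - exact (proj2 (unit_map_bijective u u_orbit)).
  - exact (unit_map_universal u u_orbit).
Qed.

End Unit.

Lemma homfunctor_faithful {X Y : C} (f f' : Hom X Y) :
  (forall x : Hom A X, f ∘ x = f' ∘ x) -> f = f'.
Proof.
  intro Hff. destruct (rc0 X) as [[x] Hx].
  exact (strict_epi_epi x (Hx x) Y f f' (Hff x)).
Qed.

(* x0 is itself a quotient A -> A/Fix(x0), whose unit map is the identity of [A,X]. *)
Lemma homfunctor_full {X Y : C} (phi : Hom A X -> Hom A Y) :
  equivariant A (homact A X) (homact A Y) phi ->
  exists f : Hom X Y, forall x, phi x = f ∘ x.
Proof.
  intro Hphi. destruct (proj1 (rc0 X)) as [x0].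
  destruct (unit_map_universal (homact A X) x0 (homact_Gaction A X) (homact_transitive X) x0
              (homact_Fix_quotient x0) (fun x => x) (fun g => eq_refl) Y phi Hphi)
    as [f [Hf _]].
  exists f. exact Hf.
Qed.

End RC.

Theorem theorem2p11 (C : Category) (A : C) :
  RC0 A -> RC1 A -> RC2 A ->
  (* [A,X] with g.x = x ∘ g is a transitive G-set *)
  (forall X : C, is_Gaction A (homact A X) /\ transitive A (homact A X)) /\
  (* [A,-]_G acts on arrows by postcomposition, giving equivariant maps *)
  (forall (X Y : C) (f : Hom X Y),
      equivariant A (homact A X) (homact A Y) (fun x => f ∘ x)) /\
  (* unit: for transitive E, x0 in E, H = Fix(x0), and A/H a quotient,
     E ≅ [A,A/H] via g.x0 |-> q ∘ g, and this is universal (left adjoint) *)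
  (forall (E : Type) (act : Aut A -> E -> E),
      is_Gaction A act -> transitive A act ->
      forall x0 : E,
        is_aut_subgroup A (Fix A act x0) /\
        forall (Q : C) (q : Hom A Q), is_quotient A (Fix A act x0) q ->
          exists u : E -> Hom A Q,
            u x0 = q /\ equivariant A act (homact A Q) u /\ bijective u /\
            (forall (X : C) (phi : E -> Hom A X),
                equivariant A act (homact A X) phi ->
                exists! k : Hom Q X, forall e : E, phi e = k ∘ u e)) /\
  (* counit: A/Fix(x) -> X is an isomorphism *)
  (forall (X : C) (x : Hom A X),
      is_aut_subgroup A (Fix A (homact A X) x) /\
      forall (Q : C) (q : Hom A Q), is_quotient A (Fix A (homact A X) x) q ->
        exists k : Hom Q X, k ∘ q = x /\ is_iso k) /\
  (* equivalence C ≃ tEns^G: [A,-]_G fully faithful ... *)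
  (forall X Y : C,
      (forall f f' : Hom X Y, (forall x : Hom A X, f ∘ x = f' ∘ x) -> f = f') /\
      (forall phi : Hom A X -> Hom A Y,
          equivariant A (homact A X) (homact A Y) phi ->
          exists f : Hom X Y, forall x, phi x = f ∘ x)) /\
  (* ... and essentially surjective *)
  (forall (E : Type) (act : Aut A -> E -> E),
      is_Gaction A act -> transitive A act ->
      exists (X : C) (u : E -> Hom A X),
        equivariant A act (homact A X) u /\ bijective u).
Proof.
  intros rc0 rc1 rc2.
  split; [|split; [|split; [|split; [|split]]]].
  - intro X. split; [apply homact_Gaction | apply homact_transitive; assumption].
  - intros X Y f g x. apply comp_assoc.
  - intros E act act_G act_trans x0.
    split; [apply Fix_subgroup; assumption|].
    intros Q q q_quot. apply unit_map_exists; assumption.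
  - intros X x. split; [apply Fix_subgroup, homact_Gaction|].
    intros Q q. apply counit_iso; assumption.
  - intros X Y. split; [apply homfunctor_faithful | apply homfunctor_full]; assumption.
  - intros E act act_G act_trans. destruct (proj1 act_trans) as [x0].
    destruct (rc1 _ (Fix_subgroup act act_G x0)) as [Q [q [q_quot _]]].
    destruct (unit_map_exists A rc1 rc2 act x0 act_G act_trans q q_quot)
      as [u [_ [Hu [Hbij _]]]].
    exists Q, u. split; assumption.
Qed.
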